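(* Let $n\ge1$ be an integer and $m=\lfloor n/2\rfloor+1$. Then $$\gcd_{1\le r\le m}\binom{n-m+r}{r}=1.$$ *)

From mathcomp Require Import all_boot.

From mathcomp Require Import all_boot zify.

(* Pascal's rule removes one unit from the "upper minus lower" index of a
   binomial coefficient; descending this way, a common divisor of any k + 1
   consecutive coefficients C(k + r, r) also divides C(r, r) = 1. *)

Lemma dvdn_binomial_pascal d k r :
  d %| 'C(k.+1 + r.+1, r.+1) -> d %| 'C(k.+1 + r, r) -> d %| 'C(k + r.+1, r.+1).
Proof.
move=> dvd_hi dvd_lo; move: dvd_hi.
by rewrite addnS binS addnC (dvdn_addr _ dvd_lo) addSnnS.
Qed.

Lemma dvdn1_binomial_window d k s :
  (forall r, s < r <= s + k.+1 -> d %| 'C(k + r, r)) -> d %| 1.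
Proof.
elim: k s => [|k IHk] s dvd_window.
  by have := dvd_window s.+1; rewrite add0n binn; apply; lia.
apply: (IHk s.+1) => -[|r] r_window; first by lia.
by apply: dvdn_binomial_pascal; apply: dvd_window; lia.
Qed.

Lemma biggcdn_nat_dvdn (F : nat -> nat) a b i :
  a <= i < b -> \big[gcdn/0]_(a <= j < b) F j %| F i.
Proof.
by rewrite -mem_index_iota => i_range; rewrite (big_rem _ i_range) dvdn_gcdl.
Qed.

Theorem lemma6 (n : nat) (hn : 1 <= n) :
  let m := n./2 + 1 in
  \big[gcdn/0]_(1 <= r < m.+1) 'C(n - m + r, r) = 1.
Proof.
move=> m; apply/eqP; rewrite -dvdn1.
have window_le_m : n - m + 1 <= m.
  by rewrite /m; have := odd_double_half n; case: (odd n) => /=; lia.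
apply: (@dvdn1_binomial_window _ (n - m) 0) => r r_window.
by apply: biggcdn_nat_dvdn; lia.
Qed.
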